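(* Let $r$ be a right reflection point of $\mathrm{OPT}$ with incident legs $\ell,\ell'$, where $\ell$ is above $\ell'$. Let $P_1$ and $P_2$ be subpaths of $\mathrm{OPT}$, both starting at $r$ and both of shadow $1$, with $\ell\in P_1$ and $\ell'\in P_2$. If there is a vertical line $\Gamma$ with $x(\Gamma)>x(r)$ crossing both $P_1$ and $P_2$, then $P_1$ is above $P_2$ in the range $[x(r),x(\Gamma)]$.
   Context: Instance: vertical line segments $s_1,\dots,s_n$ in $\mathbb{R}^2$, each of length $1$, with pairwise distinct $x$-coordinates. A tour is a cyclic sequence of points $p_1,\dots,p_\sigma$, each on some segment, with every segment containing at least one $p_j$; the straight segments joining consecutive points are legs. $\mathrm{OPT}$ is a fixed minimum-cost tour, oriented, with no two consecutive points on the same segment (no vertical legs) and not self-crossing. A point $p_j$ of $\mathrm{OPT}$ on segment $s$ is a right reflection point if both of its incident legs lie in the half-plane $x\ge x(s)$. A leg $\ell$ incident to a reflection point is above the other incident leg $\ell'$ if (apart from their common point) all points of $\ell$ have larger $y$-coordinate than all points of $\ell'$. Shadow of a path: the maximum, over vertical lines, of the number of its legs intersecting the line. A path $P_1$ is above a path $P_2$ in a range $I=[x_0,x_1]$ if for every vertical line $\Gamma'$ with $x(\Gamma')\in I$, the top-most intersection point of $\Gamma'$ with $P_1\cup P_2$ lies on $P_1$. *)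

From Stdlib Require Import Reals Lra ZArith.
Open Scope R_scope.

Definition point := (R * R)%type.

(* Instance: n vertical segments; segment i is {(sx i, y) | sy i <= y <= sy i + 1}. *)
Definition distinct_x (n : nat) (sx : nat -> R) : Prop :=
  forall i j, (i < n)%nat -> (j < n)%nat -> i <> j -> sx i <> sx j.

Definition on_seg (sx sy : nat -> R) (i : nat) (q : point) : Prop :=
  fst q = sx i /\ sy i <= snd q <= sy i + 1.

(* A tour is a cyclic sequence p 0, ..., p (sigma-1); cyclic indexing by Z. *)
Definition pt (sigma : nat) (p : nat -> point) (j : Z) : point :=
  p (Z.to_nat (Z.modulo j (Z.of_nat sigma))).

Definition is_tour (n : nat) (sx sy : nat -> R) (sigma : nat) (p : nat -> point) : Prop :=
  (0 < sigma)%nat /\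
  (forall i, (i < sigma)%nat -> exists s, (s < n)%nat /\ on_seg sx sy s (p i)) /\
  (forall s, (s < n)%nat -> exists i, (i < sigma)%nat /\ on_seg sx sy s (p i)).

Definition dist (a b : point) : R :=
  sqrt ((fst a - fst b) ^ 2 + (snd a - snd b) ^ 2).

Fixpoint rsum (f : nat -> R) (m : nat) : R :=
  match m with O => 0 | S m' => rsum f m' + f m' end.

Definition cost (sigma : nat) (p : nat -> point) : R :=
  rsum (fun i => dist (p i) (pt sigma p (Z.of_nat i + 1))) sigma.

Definition on_leg (a b z : point) : Prop :=
  exists t, 0 <= t <= 1 /\
    z = (fst a + t * (fst b - fst a), snd a + t * (snd b - snd a)).

Definition orient (a b c : point) : R :=
  (fst b - fst a) * (snd c - snd a) - (snd b - snd a) * (fst c - fst a).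

(* the legs [a,b] and [c,d] cross (properly / transversally) *)
Definition legs_cross (a b c d : point) : Prop :=
  orient a b c * orient a b d < 0 /\ orient c d a * orient c d b < 0.

Definition not_self_crossing (sigma : nat) (p : nat -> point) : Prop :=
  forall i j, (i < sigma)%nat -> (j < sigma)%nat ->
    ~ legs_cross (p i) (pt sigma p (Z.of_nat i + 1))
                 (p j) (pt sigma p (Z.of_nat j + 1)).

(* OPT: a minimum-cost tour, with no two consecutive points on the same
   segment (hence no vertical legs), and not self-crossing. *)
Definition is_OPT (n : nat) (sx sy : nat -> R) (sigma : nat) (p : nat -> point) : Prop :=
  is_tour n sx sy sigma p /\
  (forall sigma' p', is_tour n sx sy sigma' p' -> cost sigma p <= cost sigma' p') /\
  (forall i s, (i < sigma)%nat -> (s < n)%nat ->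
     ~ (on_seg sx sy s (p i) /\ on_seg sx sy s (pt sigma p (Z.of_nat i + 1)))) /\
  (forall i, (i < sigma)%nat -> fst (p i) <> fst (pt sigma p (Z.of_nat i + 1))) /\
  not_self_crossing sigma p.

Definition right_reflection (n : nat) (sx sy : nat -> R) (sigma : nat)
    (p : nat -> point) (k : nat) : Prop :=
  exists s, (s < n)%nat /\ on_seg sx sy s (p k) /\
    forall z, on_leg (p k) (pt sigma p (Z.of_nat k + 1)) z \/
              on_leg (p k) (pt sigma p (Z.of_nat k - 1)) z ->
              fst z >= sx s.

Definition leg_above (r a b : point) : Prop :=
  forall z z', on_leg r a z -> z <> r -> on_leg r b z' -> z' <> r -> snd z > snd z'.

(* A path is a point sequence q 0, ..., q m with legs [q i, q (i+1)], i < m. *)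
Definition subpath (sigma : nat) (p : nat -> point) (k : Z) (fwd : bool) : nat -> point :=
  fun j => pt sigma p (if fwd then (k + Z.of_nat j)%Z else (k - Z.of_nat j)%Z).

Definition on_path (q : nat -> point) (m : nat) (z : point) : Prop :=
  exists i, (i < m)%nat /\ on_leg (q i) (q (S i)) z.

Definition crosses_line (q : nat -> point) (m : nat) (c : R) : Prop :=
  exists z, on_path q m z /\ fst z = c.

(* number of legs met by the vertical line x = c, counted for lines through
   the open x-range of the leg (i.e. generic vertical lines) *)
Fixpoint leg_count (q : nat -> point) (m : nat) (c : R) : nat :=
  match m with
  | O => O
  | S m' => (leg_count q m' c +
      (if Rlt_dec (Rmin (fst (q m')) (fst (q (S m')))) c then
         if Rlt_dec c (Rmax (fst (q m')) (fst (q (S m')))) then 1 else 0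
       else 0))%nat
  end.

Definition shadow_one (q : nat -> point) (m : nat) : Prop :=
  (forall c, (leg_count q m c <= 1)%nat) /\ exists c, leg_count q m c = 1%nat.

Definition path_above (q1 : nat -> point) (m1 : nat) (q2 : nat -> point) (m2 : nat)
    (x0 x1 : R) : Prop :=
  forall c, x0 <= c <= x1 ->
    exists z, on_path q1 m1 z /\ fst z = c /\
      forall z', (on_path q1 m1 z' \/ on_path q2 m2 z') -> fst z' = c -> snd z' <= snd z.

(* Both subpaths are x-monotone, as their shadow is 1, and near [r] the path [P1] is above [P2]
   because [l] is above [l'].  If [P2] rose above [P1] somewhere before [x(Gamma)], take the
   first abscissa [s] where this happens: there the paths meet at a point [v], [P2] arriving
   weakly below [P1] and leaving strictly above it.  Re-routing the tour at [v] (a 2-opt move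
   through [v]) yields a tour that is no longer, and strictly shorter unless both new corners
   at [v] are straight.  Straight corners equate the slope of the leg of [P1] arriving at [v]
   with that of the leg of [P2] leaving it, and vice versa, which is incompatible with the
   crossing. *)

From Stdlib Require Import Reals Lra Lia Psatz ZArith List Classical.
Import ListNotations.
Open Scope R_scope.

Lemma rsum_ext f g N : (forall j, (j < N)%nat -> f j = g j) -> rsum f N = rsum g N.
Proof.
  induction N as [|N IH]; intros E; simpl; [reflexivity|].
  rewrite IH by (intros j Hj; apply E; lia). rewrite (E N) by lia. reflexivity.
Qed.

Lemma rsum_S_l f N : rsum f (S N) = f 0%nat + rsum (fun j => f (S j)) N.
Proof. induction N as [|N IH]; simpl in *; [lra|]. rewrite IH; lra. Qed.

Lemma rsum_rev f N : rsum f N = rsum (fun j => f (N - 1 - j)%nat) N.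
Proof.
  induction N as [|N IH]; [reflexivity|].
  change (rsum f (S N)) with (rsum f N + f N).
  rewrite IH, rsum_S_l, Rplus_comm. f_equal; [f_equal; lia|].
  apply rsum_ext; intros j _. f_equal. lia.
Qed.

Lemma rsum_shift_periodic (g : Z -> R) N (a : Z) :
  (forall z, g (z + Z.of_nat N)%Z = g z) ->
  rsum (fun j => g (a + Z.of_nat j)%Z) N = rsum (fun j => g (Z.of_nat j)) N.
Proof.
  intros Hper.
  set (F := fun a => rsum (fun j => g (a + Z.of_nat j)%Z) N).
  assert (Fsucc : forall a, F (a + 1)%Z = F a).
  { intros b. unfold F. destruct N as [|N]; [reflexivity|].
    rewrite (rsum_S_l (fun j => g (b + Z.of_nat j)%Z)).
    change (rsum ?f (S N)) with (rsum f N + f N). cbv beta.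
    replace (b + 1 + Z.of_nat N)%Z with (b + Z.of_nat (S N))%Z by lia.
    rewrite Hper, Z.add_0_r, Rplus_comm. f_equal.
    apply rsum_ext; intros j _. f_equal. lia. }
  assert (Fnat : forall a n, F (a + Z.of_nat n)%Z = F a).
  { intros b n. induction n as [|n IH]; [f_equal; lia|].
    replace (b + Z.of_nat (S n))%Z with (b + Z.of_nat n + 1)%Z by lia.
    now rewrite Fsucc. }
  change (F a = F 0%Z).
  destruct (Z_le_gt_dec 0 a).
  - rewrite <- (Fnat 0%Z (Z.to_nat a)). f_equal. lia.
  - rewrite <- (Fnat a (Z.to_nat (- a))). f_equal. lia.
Qed.

(** * Legs in the plane *)

Lemma dist_sym a b : dist a b = dist b a.
Proof. unfold dist. f_equal. ring. Qed.

Lemma dist_euc_dist a b : dist a b = dist_euc (fst a) (snd a) (fst b) (snd b).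
Proof. unfold dist, dist_euc, Rsqr. f_equal. ring. Qed.

Lemma dist_triangle a v e : dist a e <= dist a v + dist v e.
Proof. rewrite !dist_euc_dist. apply triangle. Qed.

Lemma sum_sq_nonneg x y : 0 <= x * x + y * y.
Proof. nra. Qed.

Lemma dist_straight_collinear a v e :
  dist a v + dist v e <= dist a e ->
  (fst v - fst a) * (snd e - snd v) = (snd v - snd a) * (fst e - fst v).
Proof.
  set (u1 := fst v - fst a); set (u2 := snd v - snd a).
  set (w1 := fst e - fst v); set (w2 := snd e - snd v).
  assert (Hu : dist a v = sqrt (u1 * u1 + u2 * u2)) by (unfold dist, u1, u2; f_equal; ring).
  assert (Hw : dist v e = sqrt (w1 * w1 + w2 * w2)) by (unfold dist, w1, w2; f_equal; ring).
  assert (Huw : dist a e = sqrt ((u1 + w1) * (u1 + w1) + (u2 + w2) * (u2 + w2)))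
    by (unfold dist, u1, u2, w1, w2; f_equal; ring).
  rewrite Hu, Hw, Huw. intros H.
  assert (Su := sqrt_sqrt _ (sum_sq_nonneg u1 u2)).
  assert (Sw := sqrt_sqrt _ (sum_sq_nonneg w1 w2)).
  assert (Suw := sqrt_sqrt _ (sum_sq_nonneg (u1 + w1) (u2 + w2))).
  assert (Pu := sqrt_pos (u1 * u1 + u2 * u2)).
  assert (Pw := sqrt_pos (w1 * w1 + w2 * w2)).
  set (U := sqrt (u1 * u1 + u2 * u2)) in *; set (W := sqrt (w1 * w1 + w2 * w2)) in *.
  set (UW := sqrt ((u1 + w1) * (u1 + w1) + (u2 + w2) * (u2 + w2))) in *.
  clearbody u1 u2 w1 w2 U W UW. clear Hu Hw Huw.
  (* squaring [U + W <= UW] gives [U W <= u.w]; Lagrange's identity then kills [u x w] *)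
  assert (Hsum : (U + W) * (U + W) <= UW * UW) by (apply Rmult_le_compat; lra).
  assert (Hdot : U * W <= u1 * w1 + u2 * w2) by nra.
  assert (Hsq : (U * W) * (U * W) <= (u1 * w1 + u2 * w2) * (u1 * w1 + u2 * w2))
    by (apply Rmult_le_compat; try apply Rmult_le_pos; lra).
  replace ((U * W) * (U * W)) with ((U * U) * (W * W)) in Hsq by ring.
  rewrite Su, Sw in Hsq. nra.
Qed.

Lemma pow2_sum_nonneg x y : 0 <= x ^ 2 + y ^ 2.
Proof. nra. Qed.

Lemma dist_scale a b t : 0 <= t ->
  dist a (fst a + t * (fst b - fst a), snd a + t * (snd b - snd a)) = t * dist a b.
Proof.
  intros Ht. unfold dist; cbn [fst snd].
  replace ((fst a - (fst a + t * (fst b - fst a))) ^ 2 +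
           (snd a - (snd a + t * (snd b - snd a))) ^ 2)
    with (Rsqr t * ((fst a - fst b) ^ 2 + (snd a - snd b) ^ 2)) by (unfold Rsqr; ring).
  rewrite sqrt_mult, sqrt_Rsqr by (try apply Rle_0_sqr; try apply pow2_sum_nonneg; lra).
  reflexivity.
Qed.

Lemma dist_on_leg a b v : on_leg a b v -> dist a b = dist a v + dist v b.
Proof.
  intros [t [Ht ->]]. rewrite dist_scale by lra.
  rewrite (dist_sym (fst a + t * (fst b - fst a), snd a + t * (snd b - snd a)) b).
  replace (fst a + t * (fst b - fst a), snd a + t * (snd b - snd a)) with
    (fst b + (1 - t) * (fst a - fst b), snd b + (1 - t) * (snd a - snd b)) by (f_equal; ring).
  rewrite dist_scale, (dist_sym b a) by lra. ring.
Qed.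

Lemma on_leg_end u w : on_leg u w w.
Proof. exists 1. split; [lra|]. destruct w; simpl; f_equal; ring. Qed.

Lemma on_leg_sym u w z : on_leg u w z -> on_leg w u z.
Proof.
  intros [t [Ht ->]]. exists (1 - t). split; [lra|]. f_equal; ring.
Qed.

Definition slope (u w : point) : R := (snd w - snd u) / (fst w - fst u).

Definition leg_y (u w : point) (x : R) : R := snd u + (x - fst u) * slope u w.

Lemma leg_y_start u w : leg_y u w (fst u) = snd u.
Proof. unfold leg_y. ring. Qed.

Lemma leg_y_end u w : fst u <> fst w -> leg_y u w (fst w) = snd w.
Proof. intros H. unfold leg_y, slope. field. lra. Qed.

Lemma leg_y_shift u w x h : leg_y u w (x + h) = leg_y u w x + h * slope u w.
Proof. unfold leg_y. ring. Qed.

Lemma on_leg_leg_y u w x : fst u < fst w -> fst u <= x <= fst w -> on_leg u w (x, leg_y u w x).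
Proof.
  intros H Hx. exists ((x - fst u) / (fst w - fst u)). split.
  - assert (Hd : fst w - fst u <> 0) by lra.
    assert (Hinv := Rinv_0_lt_compat (fst w - fst u) ltac:(lra)).
    assert (Hone := Rinv_r _ Hd). unfold Rdiv. nra.
  - unfold leg_y, slope. f_equal; simpl; field; lra.
Qed.

Lemma on_leg_inv u w z : fst u < fst w -> on_leg u w z ->
  fst u <= fst z <= fst w /\ snd z = leg_y u w (fst z).
Proof.
  intros H [t [Ht ->]]. simpl. split; [nra|].
  unfold leg_y, slope. field. lra.
Qed.

Lemma straight_slopes u w u' w' v : fst u < fst v < fst w' -> fst u' <> fst w' ->
  snd v = leg_y u w (fst v) -> snd v = leg_y u' w' (fst v) ->
  dist u v + dist v w' <= dist u w' -> slope u w = slope u' w'.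
Proof.
  intros Hx Hu' Hv Hv' Hstraight. apply dist_straight_collinear in Hstraight.
  assert (Hw' : snd w' - snd v = (fst w' - fst v) * slope u' w').
  { rewrite Hv', <- (leg_y_end u' w') at 1 by exact Hu'. unfold leg_y. ring. }
  rewrite Hw', Hv in Hstraight. unfold leg_y in Hstraight.
  apply (Rmult_eq_reg_l ((fst v - fst u) * (fst w' - fst v))); [|nra]. nra.
Qed.

(** * Cyclic indexing and subpaths *)

Section Cyclic.
Variables (sigma : nat) (p : nat -> point).

Lemma pt_mod z1 z2 :
  (z1 mod Z.of_nat sigma = z2 mod Z.of_nat sigma)%Z -> pt sigma p z1 = pt sigma p z2.
Proof. intros E; unfold pt; now rewrite E. Qed.

Lemma pt_add_period z : pt sigma p (z + Z.of_nat sigma)%Z = pt sigma p z.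
Proof.
  apply pt_mod. rewrite <- (Z.mul_1_l (Z.of_nat sigma)) at 1. apply Z_mod_plus_full.
Qed.

Lemma pt_of_nat i : (i < sigma)%nat -> pt sigma p (Z.of_nat i) = p i.
Proof. intros Hi. unfold pt. rewrite Z.mod_small by lia. now rewrite Nat2Z.id. Qed.

Lemma pt_vertex z : (0 < sigma)%nat -> exists i, (i < sigma)%nat /\ pt sigma p z = p i.
Proof.
  intros Hs. exists (Z.to_nat (z mod Z.of_nat sigma)).
  pose proof (Z.mod_pos_bound z (Z.of_nat sigma) ltac:(lia)). split; [lia | reflexivity].
Qed.

Lemma pt_nonvertical : (0 < sigma)%nat ->
  (forall i, (i < sigma)%nat -> fst (p i) <> fst (pt sigma p (Z.of_nat i + 1))) ->
  forall z, fst (pt sigma p z) <> fst (pt sigma p (z + 1)%Z).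
Proof.
  intros Hs Hnv z. set (i := Z.to_nat (z mod Z.of_nat sigma)).
  pose proof (Z.mod_pos_bound z (Z.of_nat sigma) ltac:(lia)).
  replace (pt sigma p (z + 1)%Z) with (pt sigma p (Z.of_nat i + 1)%Z).
  - apply Hnv. lia.
  - apply pt_mod. unfold i. rewrite Z2Nat.id by lia. apply Z.add_mod_idemp_l. lia.
Qed.

Section Subpath.
Variables (K : Z) (fwd : bool).
Let q := subpath sigma p K fwd.

Lemma subpath_0 : q 0 = pt sigma p K.
Proof. unfold q, subpath. destruct fwd; f_equal; lia. Qed.

Lemma subpath_period : q sigma = q 0.
Proof.
  unfold q, subpath. destruct fwd.
  - rewrite pt_add_period. f_equal; lia.
  - rewrite <- (pt_add_period (K - Z.of_nat sigma)). f_equal; lia.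
Qed.

Lemma subpath_negb j : (j <= sigma)%nat -> subpath sigma p K (negb fwd) j = q (sigma - j).
Proof.
  intros Hj. unfold q, subpath. destruct fwd; simpl negb.
  - rewrite <- pt_add_period. f_equal. lia.
  - rewrite <- (pt_add_period (K - Z.of_nat (sigma - j))). f_equal. lia.
Qed.

Lemma subpath_vertex j : (0 < sigma)%nat -> exists i, (i < sigma)%nat /\ q j = p i.
Proof. apply pt_vertex. Qed.

Lemma subpath_onto i : (i < sigma)%nat -> exists j, (j < sigma)%nat /\ q j = p i.
Proof.
  intros Hi. set (N := Z.of_nat sigma).
  set (d := if fwd then ((Z.of_nat i - K) mod N)%Z else ((K - Z.of_nat i) mod N)%Z).
  assert (Hd : (0 <= d < N)%Z) by (unfold d; destruct fwd; apply Z.mod_pos_bound; lia).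
  exists (Z.to_nat d). split; [lia|].
  rewrite <- pt_of_nat by exact Hi. unfold q, subpath. apply pt_mod.
  rewrite Z2Nat.id by lia. unfold d. destruct fwd.
  - rewrite Zplus_mod_idemp_r. f_equal. lia.
  - rewrite Zminus_mod_idemp_r. f_equal. lia.
Qed.

Lemma subpath_nonvertical : (0 < sigma)%nat ->
  (forall i, (i < sigma)%nat -> fst (p i) <> fst (pt sigma p (Z.of_nat i + 1))) ->
  forall j, fst (q j) <> fst (q (S j)).
Proof.
  intros Hs Hnv j. pose proof (pt_nonvertical Hs Hnv) as Hz. unfold q, subpath. destruct fwd.
  - replace (K + Z.of_nat (S j))%Z with (K + Z.of_nat j + 1)%Z by lia. apply Hz.
  - replace (K - Z.of_nat j)%Z with (K - Z.of_nat (S j) + 1)%Z by lia.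
    intros E. exact (Hz _ (eq_sym E)).
Qed.

Lemma cost_subpath : cost sigma p = rsum (fun j => dist (q j) (q (S j))) sigma.
Proof.
  set (g := fun z => dist (pt sigma p z) (pt sigma p (z + 1)%Z)).
  assert (Hper : forall z, g (z + Z.of_nat sigma)%Z = g z).
  { intros z. unfold g. rewrite pt_add_period.
    replace (z + Z.of_nat sigma + 1)%Z with (z + 1 + Z.of_nat sigma)%Z by lia.
    now rewrite pt_add_period. }
  transitivity (rsum (fun j => g (Z.of_nat j)) sigma).
  { apply rsum_ext. intros j Hj. unfold g. now rewrite pt_of_nat. }
  unfold q, subpath. destruct fwd.
  - rewrite <- (rsum_shift_periodic g sigma K Hper).
    apply rsum_ext. intros j _. unfold g. do 2 f_equal. lia.
  - rewrite <- (rsum_shift_periodic g sigma (K - Z.of_nat sigma) Hper), rsum_rev.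
    apply rsum_ext. intros j Hj. unfold g. rewrite dist_sym. f_equal; f_equal; lia.
Qed.

End Subpath.
End Cyclic.

(** * Closed polylines and the 2-opt exchange *)

Fixpoint pathlen (l : list point) : R :=
  match l with
  | x :: ((y :: _) as l') => dist x y + pathlen l'
  | _ => 0
  end.

Lemma pathlen_app l y l' : pathlen (l ++ y :: l') = pathlen (l ++ [y]) + pathlen (y :: l').
Proof.
  induction l as [|x l IH]; simpl; [lra|].
  destruct l as [|z l]; simpl in *; [lra|]. rewrite IH. lra.
Qed.

Lemma pathlen_split3 l x m y r :
  pathlen (l ++ x :: m ++ y :: r) = pathlen (l ++ [x]) + pathlen (x :: m ++ [y]) + pathlen (y :: r).
Proof.
  rewrite (pathlen_app l x). change (x :: m ++ y :: r) with ((x :: m) ++ y :: r).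
  rewrite (pathlen_app (x :: m)). simpl app. lra.
Qed.

Lemma pathlen_rev l : pathlen (rev l) = pathlen l.
Proof.
  induction l as [|x [|y l] IH]; [reflexivity | reflexivity |].
  change (rev (x :: y :: l)) with (rev (y :: l) ++ [x]).
  change (rev (y :: l)) with (rev l ++ [y]) at 1.
  rewrite <- app_assoc. simpl app. rewrite pathlen_app.
  change (rev l ++ [y]) with (rev (y :: l)). rewrite IH. simpl. rewrite (dist_sym y x). lra.
Qed.

Lemma pathlen_map_seq (f : nat -> point) a N :
  pathlen (map f (seq a (S N))) = rsum (fun j => dist (f (a + j)%nat) (f (a + S j)%nat)) N.
Proof.
  revert a; induction N as [|N IH]; intros a; [reflexivity|].
  change (map f (seq a (S (S N)))) with (f a :: map f (seq (S a) (S N))).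
  change (pathlen (f a :: map f (seq (S a) (S N))))
    with (dist (f a) (f (S a)) + pathlen (map f (seq (S a) (S N)))).
  rewrite IH, rsum_S_l, Nat.add_0_r, Nat.add_1_r. f_equal.
  apply rsum_ext; intros j _. f_equal; f_equal; lia.
Qed.

Lemma map_nth_seq {A} (L : list A) d : map (fun i => nth i L d) (seq 0 (length L)) = L.
Proof.
  induction L as [|x L IH]; [reflexivity|].
  simpl length. change (seq 0 (S (length L))) with (0%nat :: seq 1 (length L)).
  rewrite <- seq_shift. simpl. rewrite map_map. f_equal. exact IH.
Qed.

Lemma pathlen_split_block A a V B W d D b B' B0 e :
  B = b :: B' -> B = B0 ++ [e] ->
  pathlen (A ++ a :: V ++ B ++ W ++ d :: D) =
  pathlen (A ++ [a]) + pathlen (a :: V ++ [b]) + pathlen B + pathlen (e :: W ++ [d]) +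
  pathlen (d :: D).
Proof.
  intros HB1 HB2. rewrite HB1 at 1. rewrite <- app_comm_cons, pathlen_split3.
  replace (b :: B' ++ W ++ d :: D) with (B0 ++ e :: W ++ d :: D)
    by (rewrite (app_comm_cons B' _ b), <- HB1, HB2, <- app_assoc; reflexivity).
  rewrite pathlen_split3, <- HB2. lra.
Qed.

Lemma closed_list_replace (A Mid Mid' D : list point) a d x0 M :
  A ++ a :: Mid ++ d :: D = x0 :: M ++ [x0] ->
  exists M', A ++ a :: Mid' ++ d :: D = x0 :: M' ++ [x0].
Proof.
  intros E.
  destruct (exists_last (l := d :: D) ltac:(discriminate)) as [D' [x1 ED]].
  rewrite ED in *.
  assert (Hx1 : x1 = x0).
  { assert (E' : (A ++ a :: Mid ++ D') ++ [x1] = (x0 :: M) ++ [x0]).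
    { transitivity (x0 :: M ++ [x0]); [|reflexivity].
      rewrite <- E, <- !app_assoc. simpl. now rewrite <- !app_assoc. }
    now apply app_inj_tail in E' as [_ ->]. }
  subst x1. destruct A as [|y A]; simpl in E; injection E as -> _.
  - exists (Mid' ++ D'). simpl. now rewrite <- !app_assoc.
  - exists (A ++ a :: Mid' ++ D'). rewrite <- !app_assoc. simpl. now rewrite <- !app_assoc.
Qed.

Definition on_some_seg (n : nat) (sx sy : nat -> R) (y : point) : Prop :=
  exists s, (s < n)%nat /\ on_seg sx sy s y.

Definition tour_list (n : nat) (sx sy : nat -> R) (L : list point) : Prop :=
  (exists x0 M, L = x0 :: M ++ [x0]) /\
  (forall y, In y L -> on_some_seg n sx sy y) /\
  (forall s, (s < n)%nat -> exists y, In y L /\ on_seg sx sy s y).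

Section TourLists.
Variables (n : nat) (sx sy : nat -> R).

Lemma tour_of_list L :
  tour_list n sx sy L -> exists sigma' p', is_tour n sx sy sigma' p' /\ cost sigma' p' = pathlen L.
Proof.
  intros [[x0 [M ->]] [Hon Hcov]]. set (L := x0 :: M ++ [x0]) in *.
  assert (Hlen : length L = S (S (length M))) by (unfold L; simpl; rewrite length_app; simpl; lia).
  assert (Hlast : nth (S (length M)) L x0 = x0) by (unfold L; simpl; apply nth_middle).
  exists (S (length M)), (fun i => nth i L x0). split; [split; [lia | split]|].
  - intros i Hi. apply Hon, nth_In. lia.
  - intros s Hs. destruct (Hcov s Hs) as [y [Hy Hys]].
    destruct (In_nth L y x0 Hy) as [j [Hj <-]].
    destruct (Nat.eq_dec j (S (length M))) as [->|].
    + exists 0%nat. split; [lia|]. now rewrite Hlast in Hys.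
    + exists j. split; [lia | exact Hys].
  - transitivity (rsum (fun i => dist (nth i L x0) (nth (S i) L x0)) (S (length M))).
    + unfold cost. apply rsum_ext. intros i Hi. f_equal.
      destruct (Nat.eq_dec (S i) (S (length M))) as [E|].
      * unfold pt. replace (Z.of_nat i + 1)%Z with (Z.of_nat (S (length M))) by lia.
        rewrite Z.mod_same by lia. simpl Z.to_nat. now rewrite E, Hlast.
      * replace (Z.of_nat i + 1)%Z with (Z.of_nat (S i)) by lia. apply pt_of_nat. lia.
    + rewrite <- (pathlen_map_seq (fun i => nth i L x0) 0), <- Hlen. f_equal. apply map_nth_seq.
Qed.

Lemma subpath_tour_list_minimal sigma p K fwd :
  is_OPT n sx sy sigma p ->
  let L0 := map (subpath sigma p K fwd) (seq 0 (S sigma)) in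
  tour_list n sx sy L0 /\ forall L, tour_list n sx sy L -> pathlen L0 <= pathlen L.
Proof.
  intros [[Hs [Hon Hcov]] [Hmin _]] L0.
  split; [split; [|split]|].
  - destruct sigma as [|s]; [lia|].
    set (q := subpath (S s) p K fwd) in *.
    exists (q 0%nat), (map q (seq 1 s)). unfold L0.
    change (seq 0 (S (S s))) with (0%nat :: seq 1 (S s)).
    rewrite seq_S. cbn [map]. rewrite map_app. cbn [map].
    replace (q (1 + s)%nat) with (q 0%nat) by (symmetry; apply subpath_period). reflexivity.
  - intros y Hy. unfold L0 in Hy. apply in_map_iff in Hy as [j [<- _]].
    destruct (subpath_vertex sigma p K fwd j Hs) as [i [Hi ->]]. now apply Hon.
  - intros s Hsn. destruct (Hcov s Hsn) as [i [Hi Hpi]].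
    destruct (subpath_onto sigma p K fwd i Hi) as [j [Hj Ej]].
    exists (subpath sigma p K fwd j). split; [|now rewrite Ej].
    apply in_map, in_seq. lia.
  - intros L HL. destruct (tour_of_list L HL) as [sigma' [p' [Ht' <-]]].
    unfold L0. rewrite (pathlen_map_seq _ 0), <- (Hmin _ _ Ht'), (cost_subpath sigma p K fwd).
    apply Req_le, rsum_ext. reflexivity.
Qed.

(* The 2-opt move: traverse [B] backwards, joining [a] to [e] through [X1] and [b] to [d]
   through [X2]. *)
Lemma two_opt_exchange L0 A a V1 B V2 d D b B' B0 e X1 X2 :
  tour_list n sx sy L0 ->
  (forall L, tour_list n sx sy L -> pathlen L0 <= pathlen L) ->
  L0 = A ++ a :: V1 ++ B ++ V2 ++ d :: D ->
  B = b :: B' -> B = B0 ++ [e] ->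
  (forall y, In y (X1 ++ X2) -> on_some_seg n sx sy y) ->
  incl (V1 ++ V2) (X1 ++ X2) ->
  pathlen (a :: V1 ++ [b]) + pathlen (e :: V2 ++ [d]) <=
  pathlen (a :: X1 ++ [e]) + pathlen (b :: X2 ++ [d]).
Proof.
  intros [[x0 [M HM]] [Hon Hcov]] Hmin -> HB1 HB2 HX HV.
  set (L1 := A ++ a :: X1 ++ rev B ++ X2 ++ d :: D).
  assert (Hin : forall y, In y L1 <->
                  In y A \/ a = y \/ In y X1 \/ In y B \/ In y X2 \/ d = y \/ In y D).
  { intros y. unfold L1. rewrite !in_app_iff. simpl. rewrite !in_app_iff, <- in_rev. simpl. tauto. }
  assert (Hin0 : forall y, In y (A ++ a :: V1 ++ B ++ V2 ++ d :: D) <->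
                   In y A \/ a = y \/ In y V1 \/ In y B \/ In y V2 \/ d = y \/ In y D).
  { intros y. rewrite !in_app_iff. simpl. rewrite !in_app_iff. simpl. tauto. }
  assert (HL1 : tour_list n sx sy L1).
  { split; [|split].
    - rewrite app_assoc, app_assoc in HM.
      destruct (closed_list_replace A ((V1 ++ B) ++ V2) (X1 ++ rev B ++ X2) D a d x0 M HM)
        as [M' E].
      exists x0, M'. rewrite <- E. unfold L1. now rewrite <- !app_assoc.
    - intros y Hy. apply Hin in Hy.
      assert (In y (X1 ++ X2) \/ In y (A ++ a :: V1 ++ B ++ V2 ++ d :: D))
        as [|]; [rewrite in_app_iff, Hin0; tauto | apply HX | apply Hon]; assumption.
    - intros s Hs. destruct (Hcov s Hs) as [y [Hy Hys]]. exists y. split; [|exact Hys].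
      apply Hin. apply Hin0 in Hy.
      assert (In y (V1 ++ V2) -> In y (X1 ++ X2)) by apply HV.
      rewrite !in_app_iff in *. tauto. }
  specialize (Hmin L1 HL1). unfold L1 in Hmin.
  assert (HrB1 : rev B = e :: rev B0) by (rewrite HB2; apply rev_unit).
  assert (HrB2 : rev B = rev B' ++ [b]) by (rewrite HB1; reflexivity).
  rewrite (pathlen_split_block _ _ _ _ _ _ _ _ _ _ _ HB1 HB2) in Hmin.
  rewrite (pathlen_split_block _ _ _ _ _ _ _ _ _ _ _ HrB1 HrB2), pathlen_rev in Hmin.
  lra.
Qed.

Lemma touch_corners_straight L0 A a V1 B V2 d D b B' B0 e v :
  tour_list n sx sy L0 ->
  (forall L, tour_list n sx sy L -> pathlen L0 <= pathlen L) ->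
  L0 = A ++ a :: V1 ++ B ++ V2 ++ d :: D ->
  B = b :: B' -> B = B0 ++ [e] ->
  incl (V1 ++ V2) [v] ->
  pathlen (a :: V1 ++ [b]) = dist a v + dist v b ->
  pathlen (e :: V2 ++ [d]) = dist e v + dist v d ->
  dist a v + dist v e <= dist a e /\ dist b v + dist v d <= dist b d.
Proof.
  intros HL0 Hmin E HB1 HB2 HV Hab Hed.
  assert (X := fun X1 X2 => two_opt_exchange L0 A a V1 B V2 d D b B' B0 e X1 X2 HL0 Hmin E HB1 HB2).
  rewrite Hab, Hed, (dist_sym e v) in X.
  assert (Tae := dist_triangle a v e). assert (Tbd := dist_triangle b v d).
  rewrite (dist_sym v b) in X.
  (* [v] is kept on the new tour if it lies on a segment; otherwise it is no vertex of the
     tour, and then [V1], [V2] are empty. *)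
  destruct (classic (on_some_seg n sx sy v)) as [Hv|Hv].
  - assert (Hv' : forall y, In y [v] -> on_some_seg n sx sy y) by (intros y [<-|[]]; exact Hv).
    assert (X1 := X [v] [] Hv' HV). assert (X2 := X [] [v] Hv' HV).
    simpl in X1, X2. lra.
  - assert (Hno : incl (V1 ++ V2) ([] ++ [])).
    { intros y Hy. exfalso. apply Hv. assert (Hyv : In y [v]) by (apply HV; exact Hy).
      destruct Hyv as [<-|[]]. apply HL0.
      rewrite E, !in_app_iff in *. simpl. rewrite !in_app_iff. tauto. }
    assert (X0 := X [] [] (fun y Hy => match Hy with end) Hno). simpl in X0. lra.
Qed.

End TourLists.

Lemma map_seq_decompose (W : nat -> point) N i i' k k' :
  (i <= i')%nat -> (i' < k)%nat -> (k <= k')%nat -> (k' < N)%nat ->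
  map W (seq 0 (S N)) =
  map W (seq 0 i) ++ W i :: map W (seq (S i) (i' - i)) ++ map W (seq (S i') (k - i')) ++
  map W (seq (S k) (k' - k)) ++ W (S k') :: map W (seq (S (S k')) (N - S k')).
Proof.
  intros H1 H2 H3 H4.
  replace (S N) with (i + (1 + ((i' - i) + ((k - i') + ((k' - k) + (1 + (N - S k')))))))%nat
    by lia.
  rewrite !seq_app, !map_app. simpl. repeat (f_equal; try lia).
Qed.

Lemma map_seq_ends (W : nat -> point) a b : (a <= b)%nat ->
  exists B' B0, map W (seq a (S b - a)) = W a :: B' /\ map W (seq a (S b - a)) = B0 ++ [W b].
Proof.
  intros Hab. replace (S b - a)%nat with (S (b - a)) by lia.
  exists (map W (seq (S a) (b - a))), (map W (seq a (b - a))). split; [reflexivity|].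
  rewrite seq_S, map_app. simpl. do 3 f_equal. lia.
Qed.

Lemma detour_pieces (W : nat -> point) i i' v : (i <= i' <= S i)%nat ->
  (i' = S i -> W (S i) = v) -> (i' = i -> on_leg (W i) (W (S i)) v) ->
  incl (map W (seq (S i) (i' - i))) [v] /\
  pathlen (W i :: map W (seq (S i) (i' - i)) ++ [W (S i')]) = dist (W i) v + dist v (W (S i')).
Proof.
  intros Hi Hvertex Hleg. destruct (Nat.eq_dec i' i) as [->|Hne].
  - rewrite Nat.sub_diag. split; [intros y []|].
    simpl. rewrite (dist_on_leg _ _ v) by auto. lra.
  - assert (Hi' : i' = S i) by lia. subst i'. rewrite Nat.sub_succ_l, Nat.sub_diag by lia.
    simpl. rewrite Hvertex by reflexivity. split; [intros y [<-|[]]; now left | lra].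
Qed.

(** * x-monotone paths *)

Definition x_increasing (q : nat -> point) (m : nat) : Prop :=
  forall j, (j < m)%nat -> fst (q j) < fst (q (S j)).

Lemma leg_count_mono q c j m : (j <= m)%nat -> (leg_count q j c <= leg_count q m c)%nat.
Proof. induction 1; simpl; lia. Qed.

Lemma leg_count_step q m c :
  fst (q m) < c < fst (q (S m)) \/ fst (q (S m)) < c < fst (q m) ->
  leg_count q (S m) c = S (leg_count q m c).
Proof.
  intros H. simpl. unfold Rmin, Rmax.
  destruct (Rle_dec (fst (q m)) (fst (q (S m)))); destruct (Rlt_dec _ c); try lra;
    destruct (Rlt_dec c _); try lra; lia.
Qed.

(* A turn at vertex [S j] would let a vertical line just left of it meet legs [j] and [S j]. *)
Lemma shadow_one_increasing q m :
  (forall c, (leg_count q m c <= 1)%nat) ->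
  (forall j, fst (q j) <> fst (q (S j))) ->
  ((1 <= m)%nat -> fst (q 0%nat) < fst (q 1%nat)) ->
  x_increasing q m.
Proof.
  intros Hsh Hnv H0 j. induction j as [|j IH]; intros Hj; [apply H0; lia|].
  specialize (IH ltac:(lia)). pose proof (Hnv (S j)).
  destruct (Rlt_dec (fst (q (S j))) (fst (q (S (S j))))) as [|Hturn]; [assumption|exfalso].
  set (c := fst (q (S j)) -
            Rmin (fst (q (S j)) - fst (q j)) (fst (q (S j)) - fst (q (S (S j)))) / 2).
  assert (Hmin := Rmin_glb_lt (fst (q (S j)) - fst (q j)) (fst (q (S j)) - fst (q (S (S j)))) 0
                    ltac:(lra) ltac:(lra)).
  pose proof (Rmin_l (fst (q (S j)) - fst (q j)) (fst (q (S j)) - fst (q (S (S j))))).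
  pose proof (Rmin_r (fst (q (S j)) - fst (q j)) (fst (q (S j)) - fst (q (S (S j))))).
  assert (E1 := leg_count_step q j c ltac:(unfold c; lra)).
  assert (E2 := leg_count_step q (S j) c ltac:(unfold c; lra)).
  pose proof (leg_count_mono q c (S (S j)) m ltac:(lia)). specialize (Hsh c). lia.
Qed.

Section MonotonePath.
Variables (q : nat -> point) (m : nat).
Hypothesis Hq : x_increasing q m.

Lemma vertex_lt j j' : (j < j')%nat -> (j' <= m)%nat -> fst (q j) < fst (q j').
Proof.
  induction 1 as [|j' Hjj' IH]; intros Hm; [apply Hq; lia|].
  specialize (IH ltac:(lia)). pose proof (Hq j' ltac:(lia)). lra.
Qed.

Lemma vertex_le j j' : (j <= j')%nat -> (j' <= m)%nat -> fst (q j) <= fst (q j').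
Proof.
  intros Hjj' Hm. destruct (Nat.eq_dec j j') as [<-|]; [lra|].
  left. apply vertex_lt; lia.
Qed.

Lemma leg_left x : fst (q 0%nat) < x <= fst (q m) ->
  exists i, (i < m)%nat /\ fst (q i) < x <= fst (q (S i)).
Proof.
  clear Hq. induction m as [|m' IH]; intros Hx; [lra|].
  destruct (Rle_dec x (fst (q m'))).
  - destruct IH as [i [Hi Hx']]; [lra|]. exists i. split; [lia | exact Hx'].
  - exists m'. split; [lia | lra].
Qed.

Lemma leg_right x : fst (q 0%nat) <= x < fst (q m) ->
  exists i, (i < m)%nat /\ fst (q i) <= x < fst (q (S i)).
Proof.
  clear Hq. induction m as [|m' IH]; intros Hx; [lra|].
  destruct (Rlt_dec x (fst (q m'))).
  - destruct IH as [i [Hi Hx']]; [lra|]. exists i. split; [lia | exact Hx'].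
  - exists m'. split; [lia | lra].
Qed.

End MonotonePath.

(* For an x-increasing path and [x] in its x-range: the y-coordinate of the path above [x]. *)
Fixpoint height (q : nat -> point) (m : nat) (x : R) : R :=
  match m with
  | O => snd (q O)
  | S m' => if Rle_dec x (fst (q m')) then height q m' x else leg_y (q m') (q (S m')) x
  end.

Lemma height_last q m : x_increasing q m -> height q m (fst (q m)) = snd (q m).
Proof.
  intros Hq. destruct m as [|m]; [reflexivity|]. simpl.
  pose proof (Hq m ltac:(lia)).
  destruct (Rle_dec _ _); [lra|]. apply leg_y_end. lra.
Qed.

Lemma height_leg q m i x : x_increasing q m -> (i < m)%nat ->
  fst (q i) <= x <= fst (q (S i)) -> height q m x = leg_y (q i) (q (S i)) x.
Proof.
  revert i. induction m as [|m IH]; intros i Hq Hi Hx; [lia|].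
  assert (Hq' : x_increasing q m) by (intros j Hj; apply Hq; lia).
  simpl. destruct (Rle_dec x (fst (q m))) as [Hxm|Hxm].
  - destruct (Nat.eq_dec i m) as [->|Him].
    + replace x with (fst (q m)) by lra. now rewrite height_last, leg_y_start.
    + apply IH; [exact Hq' | lia | exact Hx].
  - destruct (Nat.eq_dec i m) as [->|Him]; [reflexivity|].
    pose proof (vertex_le q (S m) Hq (S i) m ltac:(lia) ltac:(lia)). lra.
Qed.

Lemma height_vertex q m j : x_increasing q m -> (j <= m)%nat -> height q m (fst (q j)) = snd (q j).
Proof.
  intros Hq Hj. destruct (Nat.eq_dec j m) as [->|]; [now apply height_last|].
  rewrite (height_leg q m j); [apply leg_y_start | exact Hq | lia |].
  pose proof (Hq j ltac:(lia)). lra.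
Qed.

Lemma on_path_height q m z : x_increasing q m -> on_path q m z ->
  fst (q 0%nat) <= fst z <= fst (q m) /\ snd z = height q m (fst z).
Proof.
  intros Hq [i [Hi Hz]]. apply on_leg_inv in Hz as [Hr Hy]; [|apply Hq; lia].
  pose proof (vertex_le q m Hq 0 i ltac:(lia) ltac:(lia)).
  pose proof (vertex_le q m Hq (S i) m ltac:(lia) ltac:(lia)).
  split; [lra|]. rewrite Hy. symmetry. now apply height_leg.
Qed.

Lemma height_on_path q m x : x_increasing q m -> (0 < m)%nat ->
  fst (q 0%nat) <= x <= fst (q m) -> on_path q m (x, height q m x).
Proof.
  intros Hq Hm Hx.
  assert (Hleg : exists i, (i < m)%nat /\ fst (q i) <= x <= fst (q (S i))).
  { destruct (Req_dec x (fst (q 0%nat))) as [->|].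
    - exists 0%nat. split; [lia|]. pose proof (Hq 0%nat Hm). lra.
    - destruct (leg_left q m x) as [i [Hi Hx']]; [lra|]. exists i. split; [exact Hi | lra]. }
  destruct Hleg as [i [Hi Hx']]. exists i. split; [exact Hi|].
  rewrite (height_leg q m i); [|exact Hq|exact Hi|exact Hx'].
  apply on_leg_leg_y; [apply Hq; exact Hi | exact Hx'].
Qed.

Lemma path_above_of_heights q1 m1 q2 m2 x0 x1 :
  x_increasing q1 m1 -> x_increasing q2 m2 -> (0 < m1)%nat ->
  fst (q1 0%nat) <= x0 -> x1 <= fst (q1 m1) ->
  (forall x, x0 <= x <= x1 -> height q2 m2 x <= height q1 m1 x) ->
  path_above q1 m1 q2 m2 x0 x1.
Proof.
  intros Hq1 Hq2 Hm1 Hx0 Hx1 Hbelow x Hx. exists (x, height q1 m1 x).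
  split; [apply height_on_path; (assumption || lra)|]. split; [reflexivity|].
  intros z [Hz|Hz] Ez.
  - apply (on_path_height q1 m1 z Hq1) in Hz as [_ ->]. rewrite Ez. apply Rle_refl.
  - apply (on_path_height q2 m2 z Hq2) in Hz as [_ ->]. rewrite Ez. apply Hbelow, Hx.
Qed.

Lemma height_shift q m i x h : x_increasing q m -> (i < m)%nat ->
  fst (q i) <= x <= fst (q (S i)) -> fst (q i) <= x + h <= fst (q (S i)) ->
  height q m (x + h) = height q m x + h * slope (q i) (q (S i)).
Proof.
  intros Hq Hi Hx Hxh. rewrite !(height_leg q m i) by assumption. apply leg_y_shift.
Qed.

Lemma legs_at_abscissa q m s i i' v : x_increasing q m ->
  (i < m)%nat /\ fst (q i) < s <= fst (q (S i)) ->
  (i' < m)%nat /\ fst (q i') <= s < fst (q (S i')) ->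
  v = (s, height q m s) ->
  (i <= i' <= S i)%nat /\ (i' = S i -> q (S i) = v) /\ (i' = i -> on_leg (q i) (q (S i)) v).
Proof.
  intros Hq [Hi Hsi] [Hi' Hsi'] ->. split; [split|split].
  - destruct (le_lt_dec i i') as [|Hlt]; [assumption|].
    pose proof (vertex_le q m Hq (S i') i ltac:(lia) ltac:(lia)). lra.
  - destruct (le_lt_dec i' (S i)) as [|Hlt]; [assumption|].
    pose proof (vertex_lt q m Hq (S i) i' Hlt ltac:(lia)). lra.
  - intros ->. assert (Hs : fst (q (S i)) = s) by lra.
    rewrite <- Hs, height_vertex by (assumption || lia). now destruct (q (S i)).
  - intros ->. rewrite (height_leg q m i) by (assumption || lra).
    apply on_leg_leg_y; [apply Hq; exact Hi | lra].
Qed.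

(** * The first upcrossing of two paths *)

(* [s] is the supremum of the [x] such that [P] holds on [[a, x)]. *)
Lemma first_failure (P : R -> Prop) a t : a <= t -> ~ P t ->
  exists s, a <= s <= t /\ (forall x, a <= x < s -> P x) /\
    (forall e, 0 < e -> exists x, s <= x < s + e /\ ~ P x).
Proof.
  intros Hat HPt.
  set (S := fun x => a <= x <= t /\ forall x', a <= x' < x -> P x').
  destruct (completeness S) as [s [Hub Hlub]].
  { exists t. intros x [Hx _]. lra. }
  { exists a. split; [lra|]. intros x' Hx'. lra. }
  assert (Has : a <= s) by (apply Hub; split; [lra|]; intros x' Hx'; lra).
  assert (Hst : s <= t) by (apply Hlub; intros x [Hx _]; lra).
  assert (Hleft : forall x, a <= x < s -> P x).
  { intros x Hx. apply NNPP. intros HPx.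
    assert (s <= x); [|lra]. apply Hlub. intros y [Hy HPy].
    destruct (Rle_dec y x) as [|Hyx]; [assumption|]. exfalso. apply HPx, HPy. lra. }
  exists s. split; [lra|]. split; [exact Hleft|].
  intros e He. apply NNPP. intros Hno.
  assert (Hright : forall x, s <= x < s + e -> P x).
  { intros x Hx. apply NNPP. intros HPx. apply Hno. exists x. split; assumption. }
  set (y := Rmin (s + e / 2) t).
  assert (Hy1 : y <= s + e / 2) by apply Rmin_l.
  assert (Hy2 : y <= t) by apply Rmin_r.
  assert (Hys : y <= s).
  { apply Hub. split; [split; [unfold y; apply Rmin_glb; lra | exact Hy2]|].
    intros x' Hx'. destruct (Rlt_dec x' s); [apply Hleft | apply Hright]; lra. }
  assert (Hyt : y = t).
  { unfold y, Rmin in *. destruct (Rle_dec (s + e / 2) t); lra. }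
  apply HPt, Hright. lra.
Qed.

Lemma affine_nonneg_left A B d : 0 < d ->
  (forall h, 0 < h <= d -> 0 <= A - h * B) -> 0 <= A /\ (A = 0 -> B <= 0).
Proof.
  intros Hd H. split.
  - destruct (Rle_dec 0 A) as [|HA]; [assumption|exfalso].
    set (h := Rmin d (- A / (2 * (Rabs B + 1)))).
    assert (HB := Rabs_pos B). assert (HBl := Rle_abs (- B)). rewrite Rabs_Ropp in HBl.
    assert (Hq : 0 < - A / (2 * (Rabs B + 1))) by (apply Rdiv_lt_0_compat; lra).
    assert (Hh0 : 0 < h) by (apply Rmin_glb_lt; lra).
    assert (Hh : h <= - A / (2 * (Rabs B + 1))) by apply Rmin_r.
    assert (Hh' : h * (2 * (Rabs B + 1)) <= - A).
    { apply (Rmult_le_compat_r (2 * (Rabs B + 1))) in Hh; [|lra].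
      unfold Rdiv in Hh. rewrite Rmult_assoc, Rinv_l in Hh by lra. lra. }
    specialize (H h (conj Hh0 (Rmin_l _ _))). nra.
  - intros ->. specialize (H d (conj Hd (Rle_refl d))). nra.
Qed.

Lemma affine_neg_right A B d : 0 < d ->
  (forall e, 0 < e <= d -> exists h, 0 <= h < e /\ A + h * B < 0) -> A <= 0 /\ (A = 0 -> B < 0).
Proof.
  intros Hd H. split.
  - destruct (Rle_dec A 0) as [|HA]; [assumption|exfalso].
    set (e := Rmin d (A / (Rabs B + 1))).
    assert (HB := Rabs_pos B). assert (HBl := Rle_abs (- B)). rewrite Rabs_Ropp in HBl.
    assert (Hq : 0 < A / (Rabs B + 1)) by (apply Rdiv_lt_0_compat; lra).
    assert (He0 : 0 < e) by (apply Rmin_glb_lt; lra).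
    assert (He : e <= A / (Rabs B + 1)) by apply Rmin_r.
    assert (He' : e * (Rabs B + 1) <= A).
    { apply (Rmult_le_compat_r (Rabs B + 1)) in He; [|lra].
      unfold Rdiv in He. rewrite Rmult_assoc, Rinv_l in He by lra. lra. }
    destruct (H e (conj He0 (Rmin_l _ _))) as [h [Hh Hneg]]. nra.
  - intros ->. destruct (H d (conj Hd (Rle_refl d))) as [h [Hh Hneg]]. nra.
Qed.

(* At abscissa [s] the paths meet and [q2] passes from weakly below [q1] to strictly above it. *)
Definition upcrossing (q1 : nat -> point) (m1 : nat) (q2 : nat -> point) (m2 : nat)
    (s : R) (i i' j j' : nat) : Prop :=
  ((i < m1)%nat /\ fst (q1 i) < s <= fst (q1 (S i))) /\
  ((i' < m1)%nat /\ fst (q1 i') <= s < fst (q1 (S i'))) /\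
  ((j < m2)%nat /\ fst (q2 j) < s <= fst (q2 (S j))) /\
  ((j' < m2)%nat /\ fst (q2 j') <= s < fst (q2 (S j'))) /\
  height q1 m1 s = height q2 m2 s /\
  slope (q1 i) (q1 (S i)) <= slope (q2 j) (q2 (S j)) /\
  slope (q1 i') (q1 (S i')) < slope (q2 j') (q2 (S j')).

Section TwoPaths.
Variables (q1 q2 : nat -> point) (m1 m2 : nat).
Hypotheses (Hq1 : x_increasing q1 m1) (Hq2 : x_increasing q2 m2).
Hypothesis same_start : q1 0%nat = q2 0%nat.
Let below x := height q2 m2 x <= height q1 m1 x.

Lemma left_limit_below s :
  fst (q1 0%nat) < s <= fst (q1 m1) -> s <= fst (q2 m2) ->
  (forall x, fst (q1 0%nat) <= x < s -> below x) ->
  exists i j, ((i < m1)%nat /\ fst (q1 i) < s <= fst (q1 (S i))) /\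
    ((j < m2)%nat /\ fst (q2 j) < s <= fst (q2 (S j))) /\ below s /\
    (height q1 m1 s = height q2 m2 s -> slope (q1 i) (q1 (S i)) <= slope (q2 j) (q2 (S j))).
Proof.
  intros Hs1 Hs2 Hleft.
  assert (Hr2 : fst (q2 0%nat) = fst (q1 0%nat)) by now rewrite same_start.
  destruct (leg_left q1 m1 s) as [i [Hi Hsi]]; [lra|].
  destruct (leg_left q2 m2 s) as [j [Hj Hsj]]; [lra|].
  pose proof (vertex_le q1 m1 Hq1 0 i ltac:(lia) ltac:(lia)).
  pose proof (vertex_le q2 m2 Hq2 0 j ltac:(lia) ltac:(lia)).
  set (d := Rmin (s - fst (q1 i)) (s - fst (q2 j))).
  assert (Hd : 0 < d) by (apply Rmin_glb_lt; lra).
  assert (Hd1 : d <= s - fst (q1 i)) by apply Rmin_l.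
  assert (Hd2 : d <= s - fst (q2 j)) by apply Rmin_r.
  clearbody d.
  destruct (affine_nonneg_left (height q1 m1 s - height q2 m2 s)
              (slope (q1 i) (q1 (S i)) - slope (q2 j) (q2 (S j))) d Hd) as [HA HB].
  { intros h Hh. specialize (Hleft (s + - h) ltac:(lra)). unfold below in Hleft.
    rewrite (height_shift q1 m1 i), (height_shift q2 m2 j) in Hleft by (assumption || lra).
    lra. }
  exists i, j. split; [|split; [|split]]; try (split; assumption).
  - unfold below. lra.
  - intros Hmeet. specialize (HB ltac:(lra)). lra.
Qed.

Lemma right_failures_above s :
  fst (q1 0%nat) <= s < fst (q1 m1) -> s < fst (q2 m2) ->
  (forall e, 0 < e -> exists x, s <= x < s + e /\ ~ below x) ->
  exists i' j', ((i' < m1)%nat /\ fst (q1 i') <= s < fst (q1 (S i'))) /\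
    ((j' < m2)%nat /\ fst (q2 j') <= s < fst (q2 (S j'))) /\ height q1 m1 s <= height q2 m2 s /\
    (height q1 m1 s = height q2 m2 s -> slope (q1 i') (q1 (S i')) < slope (q2 j') (q2 (S j'))).
Proof.
  intros Hs1 Hs2 Hright.
  assert (Hr2 : fst (q2 0%nat) = fst (q1 0%nat)) by now rewrite same_start.
  destruct (leg_right q1 m1 s) as [i' [Hi' Hsi']]; [lra|].
  destruct (leg_right q2 m2 s) as [j' [Hj' Hsj']]; [lra|].
  set (d := Rmin (fst (q1 (S i')) - s) (fst (q2 (S j')) - s)).
  assert (Hd : 0 < d) by (apply Rmin_glb_lt; lra).
  assert (Hd1 : d <= fst (q1 (S i')) - s) by apply Rmin_l.
  assert (Hd2 : d <= fst (q2 (S j')) - s) by apply Rmin_r.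
  clearbody d.
  destruct (affine_neg_right (height q1 m1 s - height q2 m2 s)
              (slope (q1 i') (q1 (S i')) - slope (q2 j') (q2 (S j'))) d Hd) as [HA HB].
  { intros e He. destruct (Hright e ltac:(lra)) as [x [Hx Hnx]].
    exists (x - s). split; [lra|]. unfold below in Hnx.
    replace x with (s + (x - s)) in Hnx by ring.
    rewrite (height_shift q1 m1 i'), (height_shift q2 m2 j') in Hnx by (assumption || lra).
    lra. }
  exists i', j'. split; [|split; [|split]]; try (split; assumption).
  - lra.
  - intros Hmeet. specialize (HB ltac:(lra)). lra.
Qed.

Lemma first_upcrossing t :
  (exists e, 0 < e /\ forall x, fst (q1 0%nat) <= x <= fst (q1 0%nat) + e -> below x) ->
  fst (q1 0%nat) <= t <= fst (q1 m1) -> t <= fst (q2 m2) -> ~ below t ->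
  exists s i i' j j', upcrossing q1 m1 q2 m2 s i i' j j'.
Proof.
  intros [e [He Hnear]] Ht1 Ht2 Hnt.
  destruct (first_failure below (fst (q1 0%nat)) t ltac:(lra) Hnt) as [s [Hs [Hleft Hright]]].
  assert (Hrs : fst (q1 0%nat) < s).
  { destruct (Rlt_dec (fst (q1 0%nat)) s) as [|Hsr]; [assumption|exfalso].
    destruct (Hright e He) as [x [Hx Hnx]]. apply Hnx, Hnear. lra. }
  destruct (left_limit_below s ltac:(lra) ltac:(lra) Hleft) as (i & j & Hi & Hj & Hbs & Hsl).
  assert (Hst : s <> t) by (intros ->; exact (Hnt Hbs)).
  destruct (right_failures_above s ltac:(lra) ltac:(lra) Hright)
    as (i' & j' & Hi' & Hj' & Has & Hsr).
  unfold below in Hbs. assert (Hmeet : height q1 m1 s = height q2 m2 s) by lra.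
  specialize (Hsl Hmeet). specialize (Hsr Hmeet).
  exists s, i, i', j, j'. unfold upcrossing. tauto.
Qed.

Lemma start_below : (1 <= m1)%nat -> (1 <= m2)%nat ->
  leg_above (q1 0%nat) (q1 1%nat) (q2 1%nat) ->
  exists e, 0 < e /\ forall x, fst (q1 0%nat) <= x <= fst (q1 0%nat) + e -> below x.
Proof.
  intros Hm1 Hm2 Habove.
  assert (Hr2 : q2 0%nat = q1 0%nat) by now rewrite same_start.
  pose proof (Hq1 0%nat Hm1). pose proof (Hq2 0%nat Hm2). rewrite Hr2 in *.
  set (e := Rmin (fst (q1 1%nat) - fst (q1 0%nat)) (fst (q2 1%nat) - fst (q1 0%nat))).
  assert (He1 : e <= fst (q1 1%nat) - fst (q1 0%nat)) by apply Rmin_l.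
  assert (He2 : e <= fst (q2 1%nat) - fst (q1 0%nat)) by apply Rmin_r.
  exists e. split; [apply Rmin_glb_lt; lra|]. intros x Hx. unfold below.
  destruct (Req_dec x (fst (q1 0%nat))) as [->|Hne].
  - rewrite (height_vertex q1 m1 0), <- Hr2, (height_vertex q2 m2 0) by (assumption || lia).
    rewrite Hr2. lra.
  - rewrite (height_leg q1 m1 0), (height_leg q2 m2 0) by (assumption || rewrite ?Hr2; lra).
    rewrite Hr2. apply Rlt_le.
    apply (Habove (x, leg_y (q1 0%nat) (q1 1%nat) x) (x, leg_y (q1 0%nat) (q2 1%nat) x)).
    + apply on_leg_leg_y; lra.
    + intros E. apply Hne. now rewrite <- E.
    + apply on_leg_leg_y; lra.
    + intros E. apply Hne. now rewrite <- E.
Qed.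

End TwoPaths.

(** * Subpaths of an optimal tour *)

(* Two x-increasing paths leaving a vertex of a cyclic sequence in opposite directions
   cannot share a leg, since they would traverse it in opposite x-directions. *)
Lemma opposite_paths_disjoint (q1 q2 : nat -> point) m1 m2 sigma i j :
  x_increasing q1 m1 -> x_increasing q2 m2 -> (m2 <= sigma)%nat ->
  (forall l, (l <= sigma)%nat -> q2 l = q1 (sigma - l)%nat) ->
  (i < m1)%nat -> (j < m2)%nat -> (i + j + 2 <= sigma)%nat.
Proof.
  intros Hq1 Hq2 Hm2 Hrefl Hi Hj.
  destruct (le_lt_dec (i + j + 2) sigma) as [|Hlt]; [assumption|exfalso].
  set (l := (sigma - S j)%nat).
  assert (E1 : q1 l = q2 (S j)) by (rewrite Hrefl by lia; f_equal; unfold l; lia).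
  assert (E2 : q1 (S l) = q2 j) by (rewrite Hrefl by lia; f_equal; unfold l; lia).
  pose proof (Hq1 l ltac:(unfold l; lia)). pose proof (Hq2 j Hj).
  rewrite E1, E2 in *. lra.
Qed.

Lemma first_leg_right n sx sy sigma p k fwd :
  (k < sigma)%nat ->
  (forall i, (i < sigma)%nat -> fst (p i) <> fst (pt sigma p (Z.of_nat i + 1))) ->
  right_reflection n sx sy sigma p k ->
  fst (p k) < fst (subpath sigma p (Z.of_nat k) fwd 1).
Proof.
  intros Hk Hnv [s [_ [[Hx _] Hright]]].
  assert (Hne := subpath_nonvertical sigma p (Z.of_nat k) fwd ltac:(lia) Hnv 0).
  rewrite subpath_0, pt_of_nat in Hne by exact Hk.
  enough (fst (p k) <= fst (subpath sigma p (Z.of_nat k) fwd 1)) by lra.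
  rewrite Hx. apply Rge_le, Hright. unfold subpath. destruct fwd.
  - left. replace (Z.of_nat k + Z.of_nat 1)%Z with (Z.of_nat k + 1)%Z by lia. apply on_leg_end.
  - right. replace (Z.of_nat k - Z.of_nat 1)%Z with (Z.of_nat k - 1)%Z by lia. apply on_leg_end.
Qed.

Lemma subpath_start_vertex sigma p k fwd :
  (k < sigma)%nat -> subpath sigma p (Z.of_nat k) fwd 0 = p k.
Proof. intros Hk. now rewrite subpath_0, pt_of_nat. Qed.

Lemma subpath_shadow_increasing n sx sy sigma p k fwd m :
  is_OPT n sx sy sigma p -> (k < sigma)%nat -> right_reflection n sx sy sigma p k ->
  (forall c, (leg_count (subpath sigma p (Z.of_nat k) fwd) m c <= 1)%nat) ->
  x_increasing (subpath sigma p (Z.of_nat k) fwd) m.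
Proof.
  intros (_ & _ & _ & Hnv & _) Hk Hrr Hsh. apply shadow_one_increasing; [exact Hsh | |].
  - apply subpath_nonvertical; [lia | exact Hnv].
  - intros _. rewrite subpath_start_vertex by exact Hk. now apply (first_leg_right n sx sy).
Qed.

Section OptimalTour.
Variables (n : nat) (sx sy : nat -> R) (sigma : nat) (p : nat -> point).
Variables (K : Z) (fwd : bool) (m1 m2 : nat).
Hypothesis Hopt : is_OPT n sx sy sigma p.
Let q1 := subpath sigma p K fwd.
Let q2 := subpath sigma p K (negb fwd).
Hypotheses (Hq1 : x_increasing q1 m1) (Hq2 : x_increasing q2 m2).
Hypothesis Hm2 : (m2 <= sigma)%nat.

(* Re-route the tour at the meeting point [v], so that [q1] continues along [q2] beyond [v]
   and vice versa; since this cannot shorten an optimal tour, both new corners are straight. *)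
Lemma upcrossing_corners_straight s i i' j j' : upcrossing q1 m1 q2 m2 s i i' j j' ->
  let v := (s, height q1 m1 s) in
  dist (q1 i) v + dist v (q2 (S j')) <= dist (q1 i) (q2 (S j')) /\
  dist (q2 j) v + dist v (q1 (S i')) <= dist (q2 j) (q1 (S i')).
Proof.
  intros (Hleg1 & Hleg1' & Hleg2 & Hleg2' & Hmeet & _) v.
  destruct (legs_at_abscissa q1 m1 s i i' v Hq1 Hleg1 Hleg1' eq_refl) as [Hii [Hv1 Hl1]].
  destruct (legs_at_abscissa q2 m2 s j j' v Hq2 Hleg2 Hleg2' ltac:(unfold v; now rewrite Hmeet))
    as [Hjj [Hv2 Hl2]].
  assert (Hrefl : forall l, (l <= sigma)%nat -> q2 l = q1 (sigma - l)%nat)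
    by (intros l Hl; apply subpath_negb, Hl).
  assert (Hdisj := opposite_paths_disjoint q1 q2 m1 m2 sigma i' j' Hq1 Hq2 Hm2 Hrefl
                     (proj1 Hleg1') (proj1 Hleg2')).
  set (k := (sigma - S j')%nat). set (k' := (sigma - S j)%nat).
  assert (Ek : q1 k = q2 (S j')) by (rewrite Hrefl by lia; f_equal; unfold k; lia).
  assert (ESk : q1 (S k) = q2 j') by (rewrite Hrefl by lia; f_equal; unfold k; lia).
  assert (ESk' : q1 (S k') = q2 j) by (rewrite Hrefl by lia; f_equal; unfold k'; lia).
  destruct (detour_pieces q1 i i' v Hii Hv1 Hl1) as [Hin1 Hlen1].
  destruct (detour_pieces q1 k k' v ltac:(unfold k, k'; lia)) as [Hin2 Hlen2].
  { intros Hk. assert (Hj' : j' = S j) by (unfold k, k' in Hk; lia).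
    rewrite ESk, <- Hv2 by exact Hj'. now f_equal. }
  { intros Hk. assert (Hj' : j' = j) by (unfold k, k' in Hk; lia).
    rewrite Ek, ESk, Hj'. apply on_leg_sym, Hl2, Hj'. }
  destruct (subpath_tour_list_minimal n sx sy sigma p K fwd Hopt) as [HL0 Hmin].
  destruct (map_seq_ends q1 (S i') k ltac:(unfold k; lia)) as [B' [B0 [HB1 HB2]]].
  destruct (touch_corners_straight n sx sy _ _ _ _ _ _ _ _ _ _ _ _ v HL0 Hmin
              (map_seq_decompose q1 sigma i i' k k' ltac:(lia) ltac:(unfold k; lia)
                 ltac:(unfold k, k'; lia) ltac:(unfold k'; lia)) HB1 HB2)
    as [Hstraight1 Hstraight2].
  - intros y Hy. apply in_app_iff in Hy as [Hy|Hy]; [apply Hin1 | apply Hin2]; exact Hy.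
  - exact Hlen1.
  - exact Hlen2.
  - rewrite Ek in Hstraight1. rewrite ESk', (dist_sym (q1 (S i')) v), (dist_sym v (q2 j)),
      (dist_sym (q1 (S i')) (q2 j)) in Hstraight2.
    split; lra.
Qed.

Lemma no_upcrossing s i i' j j' : ~ upcrossing q1 m1 q2 m2 s i i' j j'.
Proof.
  intros Hup. destruct (upcrossing_corners_straight s i i' j j' Hup) as [Hstraight1 Hstraight2].
  destruct Hup as ([Hi Hsi] & [Hi' Hsi'] & [Hj Hsj] & [Hj' Hsj'] & Hmeet & Hslope & Hslope').
  assert (Hcorner1 : slope (q1 i) (q1 (S i)) = slope (q2 j') (q2 (S j'))).
  { pose proof (Hq2 j' Hj'). apply (straight_slopes _ _ _ _ (s, height q1 m1 s)); simpl; try lra.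
    - apply height_leg; (assumption || lra).
    - rewrite Hmeet. apply height_leg; (assumption || lra). }
  assert (Hcorner2 : slope (q2 j) (q2 (S j)) = slope (q1 i') (q1 (S i'))).
  { pose proof (Hq1 i' Hi'). apply (straight_slopes _ _ _ _ (s, height q1 m1 s)); simpl; try lra.
    - rewrite Hmeet. apply height_leg; (assumption || lra).
    - apply height_leg; (assumption || lra). }
  lra.
Qed.

Lemma subpaths_ordered x : (1 <= m1)%nat -> (1 <= m2)%nat ->
  leg_above (q1 0%nat) (q1 1%nat) (q2 1%nat) ->
  fst (q1 0%nat) <= x <= fst (q1 m1) -> x <= fst (q2 m2) -> height q2 m2 x <= height q1 m1 x.
Proof.
  intros Hm1pos Hm2pos Habove Hx1 Hx2. apply NNPP. intros Hnot.
  assert (Hstart : q1 0%nat = q2 0%nat) by (unfold q1, q2; now rewrite !subpath_0).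
  assert (Hnear := start_below q1 q2 m1 m2 Hq1 Hq2 Hstart Hm1pos Hm2pos Habove).
  destruct (first_upcrossing q1 q2 m1 m2 Hq1 Hq2 Hstart x Hnear Hx1 Hx2 Hnot)
    as (s & i & i' & j & j' & Hup).
  exact (no_upcrossing s i i' j j' Hup).
Qed.

End OptimalTour.

Theorem lemma5 (n : nat) (sx sy : nat -> R) (sigma : nat) (p : nat -> point)
    (k : nat) (fwd : bool) (m1 m2 : nat) (c : R) :
  distinct_x n sx ->
  is_OPT n sx sy sigma p ->
  (k < sigma)%nat ->
  right_reflection n sx sy sigma p k ->
  (1 <= m1 <= sigma)%nat -> (1 <= m2 <= sigma)%nat ->
  leg_above (p k) (subpath sigma p (Z.of_nat k) fwd 1)
                  (subpath sigma p (Z.of_nat k) (negb fwd) 1) ->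
  shadow_one (subpath sigma p (Z.of_nat k) fwd) m1 ->
  shadow_one (subpath sigma p (Z.of_nat k) (negb fwd)) m2 ->
  fst (p k) < c ->
  crosses_line (subpath sigma p (Z.of_nat k) fwd) m1 c ->
  crosses_line (subpath sigma p (Z.of_nat k) (negb fwd)) m2 c ->
  path_above (subpath sigma p (Z.of_nat k) fwd) m1
             (subpath sigma p (Z.of_nat k) (negb fwd)) m2 (fst (p k)) c.
Proof.
  intros _ Hopt Hk Hrr Hm1 Hm2 Habove [Hsh1 _] [Hsh2 _] _ [z1 [Hz1 Ez1]] [z2 [Hz2 Ez2]].
  assert (Hq1 := subpath_shadow_increasing n sx sy sigma p k fwd m1 Hopt Hk Hrr Hsh1).
  assert (Hq2 := subpath_shadow_increasing n sx sy sigma p k (negb fwd) m2 Hopt Hk Hrr Hsh2).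
  apply (on_path_height _ _ _ Hq1) in Hz1 as [Hz1 _].
  apply (on_path_height _ _ _ Hq2) in Hz2 as [Hz2 _].
  rewrite <- (subpath_start_vertex sigma p k fwd Hk) in Habove |- *.
  apply path_above_of_heights; [exact Hq1 | exact Hq2 | lia | lra | lra |].
  intros x Hx.
  apply (subpaths_ordered n sx sy sigma p (Z.of_nat k) fwd m1 m2); (assumption || lia || lra).
Qed.
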